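(* Let $1<\beta<2$, $N\ge5$, $h=(b-a)/N$, let $\gamma\in\mathbb R$ and $D_+,D_-\ge0$ with $D_++D_->0$. Then there is a constant $c>0$ independent of $h$ (one may take $c=c_1(D_++D_-)$ with $c_1$ independent of $h$) such that for every $\bm v\in V_h$ \[ (\delta^{\beta}_h\bm v,\bm v)\le -c\ln 2\,\|\bm v\|^2 . \]
   Context: Let $a<b$, $N$ a positive integer, $h=(b-a)/N$, grid $x_i=a+ih$. $V_h$ is the space of real grid functions $\bm v=(v_0,\dots,v_N)$ with $v_0=v_N=0$; $(\bm u,\bm v)=h\sum_{i=1}^{N-1}u_iv_i$, $\|\bm u\|=\sqrt{(\bm u,\bm u)}$. For $1<\beta<2$: $g^{(\beta)}_k=(-1)^k\binom{\beta}{k}$, $\lambda_1=\frac{\beta^2+3\beta+2}{12}$, $\lambda_0=\frac{4-\beta^2}{6}$, $\lambda_{-1}=\frac{\beta^2-3\beta+2}{12}$, $\omega^{(\beta)}_0=\lambda_1g^{(\beta)}_0$, $\omega^{(\beta)}_1=\lambda_1g^{(\beta)}_1+\lambda_0g^{(\beta)}_0$, $\omega^{(\beta)}_k=\lambda_1g^{(\beta)}_k+\lambda_0g^{(\beta)}_{k-1}+\lambda_{-1}g^{(\beta)}_{k-2}$ ($k\ge2$). For $\bm v\in V_h$, $1\le i\le N-1$: $(\delta^\beta_h\bm v)_i=\gamma\frac{v_{i+1}-v_{i-1}}{2h}+\frac{D_+}{h^\beta}\sum_{k=0}^{i+1}\omega^{(\beta)}_kv_{i-k+1}+\frac{D_-}{h^\beta}\sum_{k=0}^{N-i+1}\omega^{(\beta)}_kv_{i+k-1}$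 (entries with index $0$ or $N$ are zero), and $(\delta^\beta_h\bm v,\bm v)=h\sum_{i=1}^{N-1}(\delta^\beta_h\bm v)_iv_i$. *)

From Stdlib Require Import Reals Lra Lia.
Open Scope R_scope.

Fixpoint gbinom (b : R) (k : nat) : R :=
  match k with
  | O => 1
  | S k' => gbinom b k' * (b - INR k') / (INR k' + 1)
  end.

Definition gcoef (beta : R) (k : nat) : R := (-1) ^ k * gbinom beta k.

Definition lam1 (beta : R) : R := (beta ^ 2 + 3 * beta + 2) / 12.
Definition lam0 (beta : R) : R := (4 - beta ^ 2) / 6.
Definition lamm1 (beta : R) : R := (beta ^ 2 - 3 * beta + 2) / 12.

Definition omega (beta : R) (k : nat) : R :=
  match k with
  | O => lam1 beta * gcoef beta 0
  | S O => lam1 beta * gcoef beta 1 + lam0 beta * gcoef beta 0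
  | S (S j as k1) =>
      lam1 beta * gcoef beta k + lam0 beta * gcoef beta k1 + lamm1 beta * gcoef beta j
  end.

(* Grid functions are v : nat -> R; only v 0, ..., v N are relevant.
   v is in V_h iff v 0 = 0 and v N = 0. *)
Definition in_Vh (N : nat) (v : nat -> R) : Prop := v O = 0 /\ v N = 0.

Definition meshsize (a b : R) (N : nat) : R := (b - a) / INR N.

(* (delta_h^beta v)_i for 1 <= i <= N-1; sum_f_R0 f n = f 0 + ... + f n. *)
Definition delta_h (beta gamma Dp Dm a b : R) (N : nat) (v : nat -> R) (i : nat) : R :=
  let h := meshsize a b N in
  gamma * (v (S i) - v (i - 1)%nat) / (2 * h)
  + Dp / Rpower h beta * sum_f_R0 (fun k => omega beta k * v (S i - k)%nat) (S i)
  + Dm / Rpower h beta * sum_f_R0 (fun k => omega beta k * v (i + k - 1)%nat) (S (N - i)).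

(* discrete inner product (u, v) = h * sum_{i=1}^{N-1} u_i v_i *)
Definition ip (a b : R) (N : nat) (u v : nat -> R) : R :=
  meshsize a b N * sum_f_R0 (fun j => u (S j) * v (S j)) (N - 2).

Definition norm_h (a b : R) (N : nat) (v : nat -> R) : R := sqrt (ip a b N v v).

(* The convection term is skew-symmetric, so it vanishes on V_h.  Each fractional
   sum (after reflecting v for the D_- part) equals sum_k omega_k E_k with lag sums
   E_k = sum_j v_{j+1-k} v_j.  The boundary values give E_0 = E_2, and AM-GM gives
   E_k <= E_1 = sum_j v_j^2 for k >= 1; as omega_0 + omega_2 >= 0 and omega_k >= 0
   for k >= 3, both sums are at most W_N sum_j v_j^2 with W_N = sum_{k<=N} omega_k.
   The partial sums of g_k telescope, making W_N an explicit negative multiple of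
   N g_{N-1}, and g_m >= g_4 m^(-1-beta) then gives W_N <= -kappa N^(-beta).
   Since h^(-beta) = N^beta / (b-a)^beta, the bound holds with
   c = (D_+ + D_-) kappa / ((b-a)^beta ln 2). *)

From Stdlib Require Import Reals Lra Lia Psatz.
Open Scope R_scope.

Lemma Rdiv_nonneg x y : 0 <= x -> 0 < y -> 0 <= x / y.
Proof. intros Hx Hy. apply Rmult_le_pos; [exact Hx | left; apply Rinv_0_lt_compat, Hy]. Qed.

Lemma exp_le_compat x y : x <= y -> exp x <= exp y.
Proof. intros [Hlt| ->]; [left; apply exp_increasing|]; lra. Qed.

Lemma one_sub_inv_le_ln x : 0 < x -> 1 - / x <= ln x.
Proof.
  intro Hx. destruct (Rle_lt_dec (1 - / x) (ln x)) as [|Hlt]; auto.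
  exfalso. apply exp_increasing in Hlt. rewrite exp_ln in Hlt by lra.
  assert (Hinv : / x <= exp (/ x - 1)) by (pose proof (exp_ineq1_le (/ x - 1)); lra).
  replace (1 - / x) with (- (/ x - 1)) in Hlt by ring.
  rewrite exp_Ropp in Hlt.
  apply Rinv_le_contravar in Hinv; [|apply Rinv_0_lt_compat; lra].
  rewrite Rinv_inv in Hinv. lra.
Qed.

Lemma sqr_le_Rpower_ratio u r : 1 < u -> 0 <= r ->
  (1 + r / (2 * u)) ^ 2 <= Rpower (u / (u - 1)) r.
Proof.
  intros Hu Hr. unfold Rpower.
  assert (Hx : 0 <= r / (2 * u)) by (apply Rdiv_nonneg; lra).
  apply Rle_trans with (exp (r / (2 * u) + r / (2 * u))).
  - rewrite exp_plus. pose proof (exp_ineq1_le (r / (2 * u))).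
    simpl. rewrite Rmult_1_r. apply Rmult_le_compat; lra.
  - apply exp_le_compat.
    pose proof (one_sub_inv_le_ln (u / (u - 1)) ltac:(apply Rdiv_lt_0_compat; lra)) as Hln.
    replace (1 - / (u / (u - 1))) with (/ u) in Hln by (field; lra).
    replace (r / (2 * u) + r / (2 * u)) with (r * / u) by (field; lra).
    apply Rmult_le_compat_l; lra.
Qed.

Lemma sum_telescope (f : nat -> R) n :
  sum_f_R0 (fun j => f (S j) - f j) n = f (S n) - f 0%nat.
Proof. induction n as [|n IHn]; simpl; [|rewrite IHn]; ring. Qed.

Lemma sum_f_R0_pad_zero (f : nat -> R) n m : (n <= m)%nat ->
  (forall k, (n < k <= m)%nat -> f k = 0) -> sum_f_R0 f n = sum_f_R0 f m.
Proof.
  induction 1 as [|m Hm IHm]; intro Hzero; auto.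
  rewrite tech5, <- IHm by (intros k Hk; apply Hzero; lia).
  rewrite Hzero by lia. ring.
Qed.

Lemma sum_f_R0_swap (f : nat -> nat -> R) n m :
  sum_f_R0 (fun i => sum_f_R0 (fun k => f i k) m) n
  = sum_f_R0 (fun k => sum_f_R0 (fun i => f i k) n) m.
Proof.
  induction n as [|n IHn]; simpl; auto.
  rewrite IHn, <- sum_plus. apply sum_eq; auto.
Qed.

Lemma sum_f_R0_rev (f : nat -> R) n : sum_f_R0 f n = sum_f_R0 (fun j => f (n - j)%nat) n.
Proof.
  revert f; induction n as [|n IHn]; intro f; auto.
  rewrite (decomp_sum f (S n)) by lia. simpl pred.
  rewrite (IHn (fun i => f (S i))), tech5, Nat.sub_diag, Rplus_comm.
  f_equal. apply sum_eq; intros. f_equal; lia.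
Qed.

Lemma sum_delay_le (U : nat -> R) n d : (forall i, 0 <= U i) -> U 0%nat = 0 ->
  sum_f_R0 (fun j => U (S j - d)%nat) n <= sum_f_R0 (fun j => U (S j)) n.
Proof.
  intros Hpos H0. induction d as [|d IHd].
  - right. apply sum_eq; intros; f_equal; lia.
  - eapply Rle_trans; [|exact IHd].
    pose proof (sum_telescope (fun i => U (i - d)%nat) n) as Htel.
    rewrite minus_sum, Nat.sub_0_l, H0 in Htel.
    pose proof (Hpos (S n - d)%nat).
    replace (sum_f_R0 (fun j => U (S j - S d)%nat) n)
      with (sum_f_R0 (fun i => U (i - d)%nat) n) by (apply sum_eq; auto).
    lra.
Qed.

Section Coefficients.

Variable beta : R.

Lemma gcoef_S k : gcoef beta (S k) = gcoef beta k * (INR k - beta) / (INR k + 1).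
Proof.
  unfold gcoef; simpl gbinom; simpl pow.
  assert (INR k + 1 <> 0) by (pose proof (pos_INR k); lra).
  field; auto.
Qed.

Lemma gcoef_0 : gcoef beta 0 = 1.
Proof. unfold gcoef; simpl; ring. Qed.

Lemma gcoef_1 : gcoef beta 1 = - beta.
Proof. rewrite gcoef_S, gcoef_0; simpl; field. Qed.

Lemma gcoef_2 : gcoef beta 2 = beta * (beta - 1) / 2.
Proof. rewrite gcoef_S, gcoef_1; simpl; field. Qed.

Lemma gcoef_3 : gcoef beta 3 = beta * (beta - 1) * (2 - beta) / 6.
Proof. rewrite gcoef_S, gcoef_2; simpl; field. Qed.

Lemma sum_omega_SS j :
  sum_f_R0 (omega beta) (S (S j)) =
  lam1 beta * sum_f_R0 (gcoef beta) (S (S j)) + lam0 beta * sum_f_R0 (gcoef beta) (S j)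
  + lamm1 beta * sum_f_R0 (gcoef beta) j.
Proof.
  induction j as [|j IHj]; [simpl; ring|].
  rewrite tech5, IHj, (tech5 _ (S (S j))), (tech5 _ (S j)), (tech5 _ j).
  simpl omega; ring.
Qed.

Hypothesis beta_range : 1 < beta < 2.

Lemma gcoef_pos k : (2 <= k)%nat -> 0 < gcoef beta k.
Proof.
  induction 1 as [|m Hm IHm].
  - rewrite gcoef_2; nra.
  - rewrite gcoef_S. apply le_INR in Hm; simpl in Hm.
    apply Rdiv_lt_0_compat; [apply Rmult_lt_0_compat|]; lra.
Qed.

(* The partial sums of the g_k telescope, since (k + 1) g_{k+1} = (k - beta) g_k. *)
Lemma sum_gcoef n : sum_f_R0 (gcoef beta) n = - (INR n + 1) * gcoef beta (S n) / beta.
Proof.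
  induction n as [|n IHn].
  - simpl. rewrite gcoef_1, gcoef_0. field. lra.
  - rewrite tech5, IHn, (gcoef_S (S n)), S_INR, gcoef_S.
    pose proof (pos_INR n). field. split; lra.
Qed.

Definition omega_sum_factor (J : R) : R :=
  lam1 beta * (J + 1 - beta) * (J + 2 - beta) / (J + 2)
  + lam0 beta * (J + 1 - beta) + lamm1 beta * (J + 1).

Lemma sum_omega_SS_factor j :
  sum_f_R0 (omega beta) (S (S j)) = - (gcoef beta (S j) / beta) * omega_sum_factor (INR j).
Proof.
  unfold omega_sum_factor.
  rewrite sum_omega_SS, !sum_gcoef, (gcoef_S (S (S j))), (gcoef_S (S j)), !S_INR.
  pose proof (pos_INR j). field. split; lra.
Qed.

Lemma omega_sum_factor_ge J : 3 <= J -> (J + 2) / 8 <= omega_sum_factor J.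
Proof.
  intro HJ. unfold omega_sum_factor, lam1, lam0, lamm1.
  apply (Rmult_le_reg_r (12 * (J + 2))); [lra|].
  replace ((J + 2) / 8 * (12 * (J + 2))) with (3 / 2 * (J + 2) ^ 2) by (field; lra).
  match goal with |- _ <= ?F * _ => replace (F * (12 * (J + 2))) with
    ((beta ^ 2 + 3 * beta + 2) * (J + 1 - beta) * (J + 2 - beta)
     + 2 * (4 - beta ^ 2) * (J + 2) * (J + 1 - beta)
     + (beta ^ 2 - 3 * beta + 2) * (J + 2) * (J + 1)) by (field; lra) end.
  (* with s = beta - 1 in (0,1) and t = J - 3 >= 0 the difference has a visible sign *)
  set (s := beta - 1). set (t := J - 3).
  replace beta with (1 + s) by (unfold s; ring). replace J with (3 + t) by (unfold t; ring).
  assert (0 < s < 1) by (unfold s; lra). assert (0 <= t) by (unfold t; lra).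
  match goal with |- ?L <= ?R => assert (R - L = 249 / 2 - 92 * s - 7 * s ^ 2 + 8 * s ^ 3 + s ^ 4
     + t * (75 - 24 * s - 6 * s ^ 2) + 21 / 2 * t ^ 2) by field end.
  assert (0 <= s ^ 3) by (apply pow_le; lra). assert (0 <= s ^ 4) by (apply pow_le; lra).
  assert (0 <= t * (75 - 24 * s - 6 * s ^ 2)) by (apply Rmult_le_pos; nra).
  nra.
Qed.

Lemma sum_omega_SS_le j : (3 <= j)%nat ->
  sum_f_R0 (omega beta) (S (S j)) <= - (gcoef beta (S j) * (INR j + 2) / (8 * beta)).
Proof.
  intro Hj. pose proof (gcoef_pos (S j) ltac:(lia)) as Hg.
  apply le_INR in Hj; simpl in Hj.
  pose proof (omega_sum_factor_ge (INR j) ltac:(lra)).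
  rewrite sum_omega_SS_factor.
  replace (gcoef beta (S j) * (INR j + 2) / (8 * beta))
    with (gcoef beta (S j) / beta * ((INR j + 2) / 8)) by (field; lra).
  assert (0 < gcoef beta (S j) / beta) by (apply Rdiv_lt_0_compat; lra).
  nra.
Qed.

(* g_m m^(beta+1) itself decreases slowly; shifting the weight to (m - 3)^(beta+1)
   makes it increase. *)
Lemma gcoef_Rpower_shift_step m : (4 <= m)%nat ->
  gcoef beta m * Rpower (INR m - 3) (beta + 1)
  <= gcoef beta (S m) * Rpower (INR m - 2) (beta + 1).
Proof.
  intro Hm. pose proof (gcoef_pos m ltac:(lia)) as Hg.
  apply le_INR in Hm; simpl in Hm.
  set (u := INR m - 2). assert (Hu : 2 <= u) by (unfold u; lra).
  replace (INR m - 3) with (u - 1) by (unfold u; ring).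
  replace (Rpower u (beta + 1)) with (Rpower (u - 1) (beta + 1) * Rpower (u / (u - 1)) (beta + 1))
    by (rewrite Rpower_mult_distr by (try apply Rdiv_lt_0_compat; lra); f_equal; field; lra).
  pose proof (sqr_le_Rpower_ratio u (beta + 1) ltac:(lra) ltac:(lra)) as HX.
  set (X := Rpower (u / (u - 1)) (beta + 1)) in *.
  set (Y := Rpower (u - 1) (beta + 1)).
  assert (HY : 0 < Y) by apply exp_pos.
  rewrite gcoef_S. replace (INR m) with (u + 2) by (unfold u; ring).
  assert (Hkey : u + 3 <= (u + 2 - beta) * X).
  { apply Rle_trans with ((u + 2 - beta) * (1 + (beta + 1) / (2 * u)) ^ 2);
      [|apply Rmult_le_compat_l; lra].
    apply (Rmult_le_reg_r (4 * u ^ 2)); [nra|].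
    replace ((u + 2 - beta) * (1 + (beta + 1) / (2 * u)) ^ 2 * (4 * u ^ 2))
      with ((u + 3) * (4 * u ^ 2) + 4 * u * (beta + 1) * (2 - beta) + (beta + 1) ^ 2 * (u + 2 - beta))
      by (field; lra).
    assert (0 <= 4 * u * (beta + 1) * (2 - beta)) by (repeat apply Rmult_le_pos; lra).
    assert (0 <= (beta + 1) ^ 2 * (u + 2 - beta)) by (apply Rmult_le_pos; [apply pow2_ge_0|lra]).
    lra. }
  replace (gcoef beta m * (u + 2 - beta) / (u + 2 + 1) * (Y * X))
    with (gcoef beta m * Y * ((u + 2 - beta) * X / (u + 3))) by (field; lra).
  rewrite <- (Rmult_1_r (gcoef beta m * Y)) at 1.
  apply Rmult_le_compat_l; [apply Rmult_le_pos; lra|].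
  apply (Rmult_le_reg_r (u + 3)); [lra|]. field_simplify; lra.
Qed.

Lemma gcoef_4_le_gcoef_Rpower m : (4 <= m)%nat ->
  gcoef beta 4 <= gcoef beta m * Rpower (INR m) (beta + 1).
Proof.
  intro Hm.
  assert (Hshift : gcoef beta 4 <= gcoef beta m * Rpower (INR m - 3) (beta + 1)).
  { induction Hm as [|m Hm IHm].
    - replace (INR 4 - 3) with 1 by (simpl; ring).
      unfold Rpower; rewrite ln_1, Rmult_0_r, exp_0; lra.
    - eapply Rle_trans; [apply IHm|]. rewrite S_INR.
      replace (INR m + 1 - 3) with (INR m - 2) by ring.
      apply gcoef_Rpower_shift_step; lia. }
  eapply Rle_trans; [exact Hshift|].
  pose proof (gcoef_pos m ltac:(lia)). apply le_INR in Hm; simpl in Hm.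
  apply Rmult_le_compat_l; [lra|]. apply Rle_Rpower_l; lra.
Qed.

Definition decay_const : R := gcoef beta 4 / (8 * beta).

Lemma decay_const_pos : 0 < decay_const.
Proof. apply Rdiv_lt_0_compat; [apply gcoef_pos; lia | lra]. Qed.

Lemma sum_omega_Rpower_le N : (5 <= N)%nat ->
  sum_f_R0 (omega beta) N * Rpower (INR N) beta <= - decay_const.
Proof.
  intro HN. destruct N as [|[|j]]; try lia.
  assert (HSj : INR (S j) <= INR (S (S j))) by (apply le_INR; lia).
  assert (HSj0 : 0 < INR (S j)) by (apply lt_0_INR; lia).
  assert (Hpow : INR (S (S j)) * Rpower (INR (S (S j))) beta = Rpower (INR (S (S j))) (beta + 1)).
  { rewrite Rpower_plus, Rpower_1 by lra. ring. }
  pose proof (sum_omega_SS_le j ltac:(lia)) as Hsum.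
  replace (INR j + 2) with (INR (S (S j))) in Hsum by (rewrite !S_INR; ring).
  pose proof (gcoef_4_le_gcoef_Rpower (S j) ltac:(lia)) as Hlow.
  pose proof (gcoef_pos (S j) ltac:(lia)) as Hg.
  assert (Hmono : Rpower (INR (S j)) (beta + 1) <= Rpower (INR (S (S j))) (beta + 1))
    by (apply Rle_Rpower_l; lra).
  apply Rle_trans with (- (gcoef beta (S j) * INR (S (S j)) / (8 * beta)) * Rpower (INR (S (S j))) beta).
  - apply Rmult_le_compat_r; [left; apply exp_pos | exact Hsum].
  - unfold decay_const.
    replace (- (gcoef beta (S j) * INR (S (S j)) / (8 * beta)) * Rpower (INR (S (S j))) beta)
      with (- (gcoef beta (S j) * Rpower (INR (S (S j))) (beta + 1) / (8 * beta)))
      by (rewrite <- Hpow; field; lra).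
    apply Ropp_le_contravar, Rmult_le_compat_r; [left; apply Rinv_0_lt_compat; lra|].
    eapply Rle_trans; [exact Hlow|]. apply Rmult_le_compat_l; lra.
Qed.

Lemma omega_0_add_omega_2_nonneg : 0 <= omega beta 0 + omega beta 2.
Proof.
  simpl omega. rewrite gcoef_2, gcoef_1, gcoef_0. unfold lam1, lam0, lamm1.
  set (s := beta - 1). replace beta with (1 + s) by (unfold s; ring).
  assert (0 < s < 1) by (unfold s; lra).
  match goal with |- _ <= ?R =>
    replace R with ((5 * s + 27 / 2 * s ^ 2 + 5 * s ^ 3 + 1 / 2 * s ^ 4) / 12) by field end.
  assert (0 <= s ^ 3) by (apply pow_le; lra). assert (0 <= s ^ 4) by (apply pow_le; lra).
  nra.
Qed.

Lemma omega_3_nonneg : 0 <= omega beta 3.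
Proof.
  simpl omega. rewrite gcoef_3, gcoef_2, gcoef_1. unfold lam1, lam0, lamm1.
  set (s := beta - 1). replace beta with (1 + s) by (unfold s; ring).
  assert (0 < s < 1) by (unfold s; lra).
  match goal with |- _ <= ?R =>
    replace R with (s * (1 + s) * (1 - s) * (s + 5) * (s + 6) / 72) by field end.
  apply Rdiv_nonneg; [|lra]. repeat apply Rmult_le_pos; lra.
Qed.

Lemma omega_SSSS_nonneg j : 0 <= omega beta (S (S (S (S j)))).
Proof.
  change (omega beta (S (S (S (S j))))) with
    (lam1 beta * gcoef beta (S (S (S (S j)))) + lam0 beta * gcoef beta (S (S (S j)))
     + lamm1 beta * gcoef beta (S (S j))).
  rewrite (gcoef_S (S (S (S j)))), (gcoef_S (S (S j))), !S_INR.
  pose proof (gcoef_pos (S (S j)) ltac:(lia)) as Hg.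
  set (x := gcoef beta (S (S j))) in *. set (J := INR j). assert (0 <= J) by apply pos_INR.
  unfold lam1, lam0, lamm1.
  match goal with |- _ <= ?R => replace R with (x / (12 * (J + 3) * (J + 4)) *
    ((beta ^ 2 + 3 * beta + 2) * (J + 2 - beta) * (J + 3 - beta)
     + 2 * (4 - beta ^ 2) * (J + 4) * (J + 2 - beta)
     + (beta ^ 2 - 3 * beta + 2) * (J + 4) * (J + 3))) by (field; lra) end.
  apply Rmult_le_pos; [apply Rdiv_nonneg; nra|].
  set (s := beta - 1). replace beta with (1 + s) by (unfold s; ring).
  assert (0 < s < 1) by (unfold s; lra).
  match goal with |- _ <= ?R =>
    replace R with ((1 - s) ^ 2 * (s + 6) ^ 2 + J * (48 - 30 * s - 6 * s ^ 2) + 12 * J ^ 2) by ring end.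
  assert (0 <= J * (48 - 30 * s - 6 * s ^ 2)) by (apply Rmult_le_pos; nra).
  assert (0 <= (1 - s) ^ 2 * (s + 6) ^ 2) by (apply Rmult_le_pos; apply pow2_ge_0).
  nra.
Qed.

Lemma omega_nonneg k : (3 <= k)%nat -> 0 <= omega beta k.
Proof.
  intro Hk. destruct k as [|[|[|[|j]]]]; try lia.
  - apply omega_3_nonneg.
  - apply omega_SSSS_nonneg.
Qed.

End Coefficients.

Definition sumsq (N : nat) (v : nat -> R) : R :=
  sum_f_R0 (fun j => v (S j) * v (S j)) (N - 2).

(* lag_sum n v k = sum_{j=1}^{n+1} v_{j+1-k} v_j, with v_i read as v_0 for i < 0 *)
Definition lag_sum (n : nat) (v : nat -> R) (k : nat) : R :=
  sum_f_R0 (fun j => v (S (S j) - k)%nat * v (S j)) n.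

Lemma lag_sum_S_le n v d : v 0%nat = 0 ->
  lag_sum n v (S d) <= sum_f_R0 (fun j => v (S j) * v (S j)) n.
Proof.
  intro H0. unfold lag_sum.
  apply Rle_trans with
    (sum_f_R0 (fun j => (v (S j - d)%nat * v (S j - d)%nat + v (S j) * v (S j)) / 2) n).
  - apply sum_Rle; intros j _.
    change (S (S j) - S d)%nat with (S j - d)%nat.
    pose proof (Rle_0_sqr (v (S j - d)%nat - v (S j))). unfold Rsqr in *. lra.
  - pose proof (sum_delay_le (fun i => v i * v i) n d
      ltac:(intros; apply Rle_0_sqr) ltac:(cbv beta; rewrite H0; ring)) as Hdelay.
    replace (sum_f_R0 (fun j => (v (S j - d)%nat * v (S j - d)%nat + v (S j) * v (S j)) / 2) n)
      with ((sum_f_R0 (fun j => v (S j - d)%nat * v (S j - d)%nat) n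
             + sum_f_R0 (fun j => v (S j) * v (S j)) n) / 2)
      by (rewrite <- sum_plus; unfold Rdiv; rewrite Rmult_comm, scal_sum;
          apply sum_eq; intros; ring).
    cbv beta in Hdelay. lra.
Qed.

Lemma lag_sum_0_eq_2 n v : v 0%nat = 0 -> v (S (S n)) = 0 -> lag_sum n v 0 = lag_sum n v 2.
Proof.
  intros H0 Hend. unfold lag_sum.
  pose proof (sum_telescope (fun j => v (S j) * v j) n) as Htel.
  rewrite minus_sum, Hend, H0 in Htel.
  replace (sum_f_R0 (fun j => v (S (S j) - 0)%nat * v (S j)) n)
    with (sum_f_R0 (fun j => v (S (S j)) * v (S j)) n) by (apply sum_eq; auto).
  replace (sum_f_R0 (fun j => v (S (S j) - 2)%nat * v (S j)) n)
    with (sum_f_R0 (fun j => v (S j) * v j) n)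
    by (apply sum_eq; intros; simpl; rewrite Nat.sub_0_r; ring).
  lra.
Qed.

Section Forms.

Variable w : nat -> R.

Definition left_form (N : nat) (v : nat -> R) : R :=
  sum_f_R0 (fun j => sum_f_R0 (fun k => w k * v (S (S j) - k)%nat) (S (S j)) * v (S j)) (N - 2).

Definition right_form (N : nat) (v : nat -> R) : R :=
  sum_f_R0 (fun j => sum_f_R0 (fun k => w k * v (S j + k - 1)%nat) (S (N - S j)) * v (S j)) (N - 2).

Lemma left_form_lag_sum N v : (2 <= N)%nat -> v 0%nat = 0 ->
  left_form N v = sum_f_R0 (fun k => w k * lag_sum (N - 2) v k) N.
Proof.
  intros HN H0. unfold left_form, lag_sum.
  rewrite (sum_eq _ (fun j => sum_f_R0 (fun k => w k * (v (S (S j) - k)%nat * v (S j))) N)).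
  - rewrite sum_f_R0_swap. apply sum_eq; intros.
    rewrite scal_sum. apply sum_eq; intros; ring.
  - intros j Hj. rewrite Rmult_comm, scal_sum.
    rewrite (sum_f_R0_pad_zero _ (S (S j)) N) by
      (lia || (intros k Hk; replace (S (S j) - k)%nat with 0%nat by lia; rewrite H0; ring)).
    apply sum_eq; intros; ring.
Qed.

(* The lag-0 and lag-2 terms coincide and every other lag is dominated by the
   lag-1 term, so only w_0 + w_2 and the w_k (k >= 3) need a sign. *)
Lemma left_form_le N v :
  0 <= w 0%nat + w 2%nat -> (forall k, (3 <= k)%nat -> 0 <= w k) ->
  (3 <= N)%nat -> v 0%nat = 0 -> v N = 0 ->
  left_form N v <= sum_f_R0 w N * sumsq N v.
Proof.
  intros Hw02 Hw HN H0 HvN. rewrite left_form_lag_sum by (auto; lia).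
  destruct N as [|[|[|n]]]; try lia.
  unfold sumsq. simpl (S (S (S n)) - 2)%nat.
  set (Sq := sum_f_R0 (fun j => v (S j) * v (S j)) (S n)).
  rewrite !(decomp_sum _ (S (S (S n)))), !(decomp_sum _ (S (S n))), !(decomp_sum _ (S n)) by lia.
  simpl pred.
  assert (Hlag1 : lag_sum (S n) v 1 = Sq) by (apply sum_eq; intros; f_equal; f_equal; lia).
  assert (Hlag02 : lag_sum (S n) v 0 = lag_sum (S n) v 2) by (apply lag_sum_0_eq_2; auto).
  assert (Hlag2 : lag_sum (S n) v 2 <= Sq) by (apply lag_sum_S_le; auto).
  assert (Hrest : sum_f_R0 (fun i => w (S (S (S i))) * lag_sum (S n) v (S (S (S i)))) n
                  <= sum_f_R0 (fun i => w (S (S (S i)))) n * Sq).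
  { rewrite Rmult_comm, scal_sum. apply sum_Rle; intros i _.
    apply Rmult_le_compat_l; [apply Hw; lia|].
    apply lag_sum_S_le; auto. }
  rewrite Hlag02, Hlag1.
  assert ((w 0%nat + w 2%nat) * lag_sum (S n) v 2 <= (w 0%nat + w 2%nat) * Sq)
    by (apply Rmult_le_compat_l; auto).
  lra.
Qed.

Lemma right_form_reflect N v : (2 <= N)%nat ->
  right_form N v = left_form N (fun i => v (N - i)%nat).
Proof.
  intro HN. unfold right_form, left_form. rewrite (sum_f_R0_rev _ (N - 2)).
  apply sum_eq; intros j Hj.
  replace (N - S (N - 2 - j))%nat with (S j) by lia.
  f_equal; [apply sum_eq; intros k Hk|]; do 2 f_equal; lia.
Qed.

Lemma sumsq_reflect N v : (2 <= N)%nat -> sumsq N (fun i => v (N - i)%nat) = sumsq N v.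
Proof.
  intro HN. unfold sumsq. rewrite (sum_f_R0_rev _ (N - 2)).
  apply sum_eq; intros j Hj. replace (N - S (N - 2 - j))%nat with (S j) by lia. ring.
Qed.

Lemma right_form_le N v :
  0 <= w 0%nat + w 2%nat -> (forall k, (3 <= k)%nat -> 0 <= w k) ->
  (3 <= N)%nat -> v 0%nat = 0 -> v N = 0 ->
  right_form N v <= sum_f_R0 w N * sumsq N v.
Proof.
  intros Hw02 Hw HN H0 HvN.
  rewrite right_form_reflect, <- (sumsq_reflect N v) by lia.
  apply left_form_le; auto; [rewrite Nat.sub_0_r | rewrite Nat.sub_diag]; auto.
Qed.

End Forms.

Lemma convection_sum_zero N v : (2 <= N)%nat -> in_Vh N v ->
  sum_f_R0 (fun j => (v (S (S j)) - v j) * v (S j)) (N - 2) = 0.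
Proof.
  intros HN [H0 HvN].
  rewrite (sum_eq _ (fun j => v (S (S j)) * v (S j) - v (S j) * v j)) by (intros; ring).
  rewrite (sum_telescope (fun i => v (S i) * v i)).
  replace (S (S (N - 2))) with N by lia. rewrite H0, HvN. ring.
Qed.

Lemma ip_delta_h_eq beta gamma Dp Dm a b N v : a < b -> (2 <= N)%nat -> in_Vh N v ->
  ip a b N (delta_h beta gamma Dp Dm a b N v) v
  = meshsize a b N / Rpower (meshsize a b N) beta
    * (Dp * left_form (omega beta) N v + Dm * right_form (omega beta) N v).
Proof.
  intros Hab HN Hv. set (h := meshsize a b N).
  assert (Hh : 0 < h) by (apply Rdiv_lt_0_compat; [lra | apply lt_0_INR; lia]).
  assert (HP : 0 < Rpower h beta) by apply exp_pos.
  pose proof (convection_sum_zero N v HN Hv) as Hconv.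
  transitivity (h * (gamma / (2 * h) * sum_f_R0 (fun j => (v (S (S j)) - v j) * v (S j)) (N - 2)
      + Dp / Rpower h beta * left_form (omega beta) N v
      + Dm / Rpower h beta * right_form (omega beta) N v)).
  - unfold ip. fold h. f_equal.
    unfold left_form, right_form. rewrite !scal_sum, <- !sum_plus.
    apply sum_eq; intros j Hj. unfold delta_h. fold h.
    replace (S j - 1)%nat with j by lia. field. lra.
  - rewrite Hconv. field. lra.
Qed.

Lemma ip_delta_h_le beta gamma Dp Dm a b N v :
  1 < beta < 2 -> a < b -> 0 <= Dp -> 0 <= Dm -> (5 <= N)%nat -> in_Vh N v ->
  ip a b N (delta_h beta gamma Dp Dm a b N v) v
  <= (Dp + Dm) * (sum_f_R0 (omega beta) N / Rpower (meshsize a b N) beta) * ip a b N v v.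
Proof.
  intros Hbeta Hab HDp HDm HN Hv.
  pose proof (omega_0_add_omega_2_nonneg beta Hbeta) as H02.
  pose proof (omega_nonneg beta Hbeta) as Hpos.
  destruct Hv as [H0 HvN].
  assert (Hl : left_form (omega beta) N v <= sum_f_R0 (omega beta) N * sumsq N v)
    by (apply left_form_le; auto; lia).
  assert (Hr : right_form (omega beta) N v <= sum_f_R0 (omega beta) N * sumsq N v)
    by (apply right_form_le; auto; lia).
  rewrite ip_delta_h_eq by (try split; auto; lia).
  set (h := meshsize a b N).
  assert (Hh : 0 < h) by (apply Rdiv_lt_0_compat; [lra | apply lt_0_INR; lia]).
  assert (HP : 0 < Rpower h beta) by apply exp_pos.
  change (ip a b N v v) with (h * sumsq N v).
  replace ((Dp + Dm) * (sum_f_R0 (omega beta) N / Rpower h beta) * (h * sumsq N v))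
    with (h / Rpower h beta * (Dp * (sum_f_R0 (omega beta) N * sumsq N v)
                               + Dm * (sum_f_R0 (omega beta) N * sumsq N v)))
    by (field; lra).
  apply Rmult_le_compat_l; [apply Rdiv_nonneg; lra|].
  apply Rplus_le_compat; apply Rmult_le_compat_l; auto.
Qed.

Lemma Rpower_meshsize a b N beta : a < b -> (0 < N)%nat ->
  Rpower (meshsize a b N) beta * Rpower (INR N) beta = Rpower (b - a) beta.
Proof.
  intros Hab HN. assert (0 < INR N) by (apply lt_0_INR; lia).
  rewrite Rpower_mult_distr by (try apply Rdiv_lt_0_compat; lra).
  f_equal. unfold meshsize. field. lra.
Qed.

Lemma sum_omega_div_Rpower_meshsize_le beta a b N : 1 < beta < 2 -> a < b -> (5 <= N)%nat ->
  sum_f_R0 (omega beta) N / Rpower (meshsize a b N) beta <= - decay_const beta / Rpower (b - a) beta.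
Proof.
  intros Hbeta Hab HN.
  rewrite <- (Rpower_meshsize a b N beta) by (auto; lia).
  assert (HP : 0 < Rpower (meshsize a b N) beta) by apply exp_pos.
  assert (HQ : 0 < Rpower (INR N) beta) by apply exp_pos.
  replace (sum_f_R0 (omega beta) N / Rpower (meshsize a b N) beta)
    with (sum_f_R0 (omega beta) N * Rpower (INR N) beta
          / (Rpower (meshsize a b N) beta * Rpower (INR N) beta)) by (field; lra).
  apply Rmult_le_compat_r; [left; apply Rinv_0_lt_compat, Rmult_lt_0_compat; auto|].
  apply sum_omega_Rpower_le; auto.
Qed.

Theorem theorem1 :
  forall (a b beta gamma Dp Dm : R),
    a < b -> 1 < beta < 2 -> 0 <= Dp -> 0 <= Dm -> 0 < Dp + Dm ->
    exists c : R, 0 < c /\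
      forall (N : nat) (v : nat -> R),
        (5 <= N)%nat -> in_Vh N v ->
        ip a b N (delta_h beta gamma Dp Dm a b N v) v
          <= - c * ln 2 * (norm_h a b N v) ^ 2.
Proof.
  intros a b beta gamma Dp Dm Hab Hbeta HDp HDm HD.
  set (K := Rpower (b - a) beta).
  assert (HK : 0 < K) by apply exp_pos.
  assert (Hln2 : 0 < ln 2) by (pose proof ln_lt_2; lra).
  pose proof (decay_const_pos beta Hbeta) as Hkappa.
  exists ((Dp + Dm) * decay_const beta / (K * ln 2)). split.
  { apply Rdiv_lt_0_compat; apply Rmult_lt_0_compat; lra. }
  intros N v HN Hv.
  assert (Hvv : 0 <= ip a b N v v).
  { apply Rmult_le_pos.
    - left; apply Rdiv_lt_0_compat; [lra | apply lt_0_INR; lia].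
    - apply cond_pos_sum; intros; apply Rle_0_sqr. }
  unfold norm_h. rewrite pow2_sqrt by exact Hvv.
  eapply Rle_trans; [apply ip_delta_h_le; auto|].
  replace (- ((Dp + Dm) * decay_const beta / (K * ln 2)) * ln 2 * ip a b N v v)
    with ((Dp + Dm) * (- decay_const beta / K) * ip a b N v v) by (field; lra).
  apply Rmult_le_compat_r; [exact Hvv|]. apply Rmult_le_compat_l; [lra|].
  apply sum_omega_div_Rpower_meshsize_le; auto.
Qed.
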